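(* Consider Algorithm FoBa-gdt with parameter $\epsilon>0$, and let $\beta^{(k)}$ with support $F^{(k)}$ be the iterate at the beginning of some iteration with $k\ge1$. Then for any $\bar\beta\in\mathbb{R}^d$ with support $\bar F$, $$\|\beta^{(k)}_{F^{(k)}-\bar F}\|^2=\|(\beta^{(k)}-\bar\beta)_{F^{(k)}-\bar F}\|^2\ge\frac{\delta^{(k)}}{\rho_+(1)}|F^{(k)}-\bar F|\ge\frac{\epsilon^2}{2\rho_+(1)^2}|F^{(k)}-\bar F|.$$
   Context: Let $Q:\mathbb{R}^d\to\mathbb{R}$ be convex and continuously differentiable. $e_j$ is the $j$-th standard basis vector, $\mathrm{supp}(\beta)=\{j:\beta_j\ne0\}$, $\|\beta\|_0=|\mathrm{supp}(\beta)|$, $\|\cdot\|$ is the Euclidean norm, $A-B$ is set difference, and $v_S$ is $v$ restricted to the coordinates in $S$. For $F\subseteq\{1,\dots,d\}$, $\hat\beta(F)$ denotes a minimizer of $Q$ over $\{\beta:\mathrm{supp}(\beta)\subseteq F\}$ (assumed to exist). For a positive integer $s$, the restricted strong convexity constants $\rho_-(s),\rho_+(s)>0$ are constants such that for all $\beta,\beta'\in\mathbb{R}^d$ with $\|\beta'-\beta\|_0\le s$: $\frac{\rho_-(s)}{2}\|\beta'-\beta\|^2\le Q(\beta')-Q(\beta)-\langle\nabla Q(\beta),\beta'-\beta\rangle\le\frac{\rho_+(s)}{2}\|\beta'-\beta\|^2.$ Algorithm FoBa has two variants: FoBa-obj (parameter $\delta>0$) and FoBa-gdt (parameter $\epsilon>0$).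 Initialize $F^{(0)}=\emptyset$, $\beta^{(0)}=0$, $k=0$, and repeat the following iteration. (1) Stopping test: FoBa-obj stops if $Q(\beta^{(k)})-\min_{\alpha\in\mathbb{R},\,j\notin F^{(k)}}Q(\beta^{(k)}+\alpha e_j)<\delta$; FoBa-gdt stops if $\|\nabla Q(\beta^{(k)})\|_\infty<\epsilon$. On stopping the output is $\beta^{(k)}$ with support $F^{(k)}$, and the algorithm is said to terminate at $k$. (2) Forward step: FoBa-obj picks $i^{(k)}\in\arg\min_{i\notin F^{(k)}}\min_\alpha Q(\beta^{(k)}+\alpha e_i)$; FoBa-gdt picks $i^{(k)}\in\arg\max_{i\notin F^{(k)}}|\nabla Q(\beta^{(k)})_i|$. Set $F^{(k+1)}=F^{(k)}\cup\{i^{(k)}\}$, $\beta^{(k+1)}=\hat\beta(F^{(k+1)})$, $\delta^{(k+1)}=Q(\beta^{(k)})-Q(\beta^{(k+1)})$, $k\leftarrow k+1$. (3) Backward step: repeat — if $F^{(k)}=\emptyset$ or $\min_{i\in F^{(k)}}Q(\beta^{(k)}-\beta^{(k)}_ie_i)-Q(\beta^{(k)})\ge\delta^{(k)}/2$, leave the backward step; otherwise pick $j\in\arg\min_{i\in F^{(k)}}Q(\beta^{(k)}-\beta^{(k)}_ie_i)$, set $F^{(k-1)}=F^{(k)}-\{j\}$, $\beta^{(k-1)}=\hat\beta(F^{(k-1)})$, $k\leftarrow k-1$ (where $\delta^{(k-1)}$ is the value recorded at the most recent forward step producing index $k-1$). Thus $|F^{(k)}|=k$ always. ''At the beginning of an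 iteration'' means the state just before a stopping test. *)

From Stdlib Require Import Reals.
From mathcomp Require Import all_boot.
Set Implicit Arguments. Unset Strict Implicit. Unset Printing Implicit Defensive.
Open Scope R_scope.

Definition vec (d : nat) := 'I_d -> R.

Definition vzero d : vec d := fun _ => 0.
Definition vadd d (x y : vec d) : vec d := fun i => x i + y i.
Definition vsub d (x y : vec d) : vec d := fun i => x i - y i.
Definition vscale d (a : R) (x : vec d) : vec d := fun i => a * x i.
Definition ej d (j : 'I_d) : vec d := fun i => if i == j then 1 else 0.

Definition nonzeroR (x : R) : bool := if Req_EM_T x 0 then false else true.
Definition supp d (x : vec d) : {set 'I_d} := [set i | nonzeroR (x i)].

Definition dot d (x y : vec d) : R := \big[Rplus/0]_(i < d) (x i * y i).
Definition sqnorm_on d (A : {set 'I_d}) (x : vec d) : R :=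
  \big[Rplus/0]_(i in A) (x i * x i).
Definition norm d (x : vec d) : R := sqrt (dot x x).

Definition convex d (Q : vec d -> R) : Prop :=
  forall x y t, 0 <= t <= 1 ->
    Q (vadd (vscale t x) (vscale (1 - t) y)) <= t * Q x + (1 - t) * Q y.

Definition is_gradient d (Q : vec d -> R) (g : vec d -> vec d) : Prop :=
  forall x eps, 0 < eps -> exists del, 0 < del /\
    forall h, norm h < del ->
      Rabs (Q (vadd x h) - Q x - dot (g x) h) <= eps * norm h.

Definition continuous_vec d (g : vec d -> vec d) : Prop :=
  forall x eps, 0 < eps -> exists del, 0 < del /\
    forall y, norm (vsub y x) < del -> norm (vsub (g y) (g x)) < eps.

Definition rsc d (Q : vec d -> R) (g : vec d -> vec d) (s : nat) (rm rp : R) : Prop :=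
  0 < rm /\ 0 < rp /\
  forall b b' : vec d, (#|supp (vsub b' b)| <= s)%N ->
    rm / 2 * (norm (vsub b' b))^2 <= Q b' - Q b - dot (g b) (vsub b' b) /\
    Q b' - Q b - dot (g b) (vsub b' b) <= rp / 2 * (norm (vsub b' b))^2.

Definition restricted_min d (Q : vec d -> R) (F : {set 'I_d}) (b : vec d) : Prop :=
  supp b \subset F /\ forall b', supp b' \subset F -> Q b <= Q b'.

(* state of FoBa: current support F^(k) (k = #|F|), iterate beta^(k),
   and recorded values delta^(m) (delta m = value recorded at the most recent
   forward step producing index m). *)
Record state (d : nat) := mkState {
  stF : {set 'I_d};
  stB : vec d;
  stDelta : nat -> R }.

Definition upd (f : nat -> R) (m : nat) (v : R) : nat -> R :=
  fun n => if n == m then v else f n.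

Definition Qdrop d (Q : vec d -> R) (b : vec d) (i : 'I_d) : R :=
  Q (vsub b (vscale (b i) (ej i))).

(* Execution of FoBa-gdt with parameter eps.
   fb_begin s : s is a state at the beginning of an iteration (just before a
                stopping test);
   fb_back s  : s is a state inside the backward loop (just before its test). *)
Inductive fb_begin d (Q : vec d -> R) (g : vec d -> vec d) (eps : R) : state d -> Prop :=
| fb_init : fb_begin Q g eps (mkState set0 (@vzero d) (fun _ => 0))
| fb_leave : forall s, fb_back Q g eps s ->
    (stF s = set0 \/
     forall i, i \in stF s ->
       Qdrop Q (stB s) i - Q (stB s) >= stDelta s #|stF s| / 2) ->
    fb_begin Q g eps s
with fb_back d (Q : vec d -> R) (g : vec d -> vec d) (eps : R) : state d -> Prop :=
| fb_forward : forall s i b',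
    fb_begin Q g eps s ->
    (* stopping test fails: not ||grad Q(beta^(k))||_inf < eps *)
    ~ (forall j, Rabs (g (stB s) j) < eps) ->
    i \notin stF s ->
    (forall j, j \notin stF s -> Rabs (g (stB s) j) <= Rabs (g (stB s) i)) ->
    restricted_min Q (i |: stF s) b' ->
    fb_back Q g eps
      (mkState (i |: stF s) b'
         (upd (stDelta s) (#|stF s|.+1) (Q (stB s) - Q b')))
| fb_backward : forall s j b',
    fb_back Q g eps s ->
    stF s != set0 ->
    j \in stF s ->
    (forall i, i \in stF s -> Qdrop Q (stB s) j <= Qdrop Q (stB s) i) ->
    Qdrop Q (stB s) j - Q (stB s) < stDelta s #|stF s| / 2 ->
    restricted_min Q (stF s :\ j) b' ->
    fb_back Q g eps (mkState (stF s :\ j) b' (stDelta s)).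

(* From it:
   - a gradient step along coordinate i decreases Q by g_i^2 / (2 rho_+);
   - hence at a restricted minimizer over F the gradient vanishes on F;
   - hence each forward step, whose chosen coordinate has |g_i| >= eps,
     gains delta >= eps^2 / (2 rho_+);
   - removing coordinate i from a restricted minimizer costs at most
     rho_+ b_i^2 / 2, so the backward-exit test gives b_i^2 >= delta/rho_+.
   An induction over the execution shows that iterates are restricted
   minimizers and all recorded deltas are large; summing the coordinate
   bound over F^(k) - supp bbar gives the theorem. *)
From HB Require Import structures.
From Stdlib Require Import Reals Lra Classical FunctionalExtensionality.
From mathcomp Require Import all_boot.
Open Scope R_scope.
Set Implicit Arguments.

Lemma Rplus_associative : associative Rplus.
Proof. by move=> x y z; rewrite Rplus_assoc. Qed.
HB.instance Definition _ :=
  Monoid.isComLaw.Build R 0 Rplus Rplus_associative Rplus_comm Rplus_0_l.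

Lemma sum_ge_card d (A : {set 'I_d}) (f : 'I_d -> R) (c : R) :
  (forall i, i \in A -> c <= f i) -> INR #|A| * c <= \big[Rplus/0]_(i in A) f i.
Proof.
move=> Hf.
have -> : INR #|A| * c = \big[Rplus/0]_(i in A) c.
  rewrite big_const; elim: #|A| => [|n IH]; first by rewrite /=; ring.
  by rewrite iterS -IH S_INR; ring.
by apply: (big_ind2 Rle) => [|x1 x2 y1 y2|]; [lra | lra | exact: Hf].
Qed.

Lemma nonzeroRP (x : R) : nonzeroR x = true <-> x <> 0.
Proof. by rewrite /nonzeroR; case: Req_EM_T. Qed.

Lemma notin_supp d (x : vec d) (i : 'I_d) : i \notin supp x -> x i = 0.
Proof.
rewrite inE => nz; case: (Req_EM_T (x i) 0) => // /nonzeroRP.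
by move/negP: nz.
Qed.

Lemma ej_same d (i : 'I_d) : ej i i = 1.
Proof. by rewrite /ej eqxx. Qed.

Lemma ej_diff d (i k : 'I_d) : k != i -> ej i k = 0.
Proof. by rewrite /ej => /negbTE ->. Qed.

Lemma single_coord_facts d (x : vec d) (i : 'I_d) :
  (forall k, k != i -> x k = 0) ->
  [/\ (#|supp x| <= 1)%N, forall y, dot y x = y i * x i & norm x ^ 2 = x i * x i].
Proof.
move=> Hx.
have Hdot : forall y, dot y x = y i * x i.
  move=> y; rewrite /dot (bigD1 i) //= big1 ?Rplus_0_r // => k /Hx ->; ring.
split=> //; last by rewrite /norm Hdot pow2_sqrt //; nra.
rewrite -(cards1 i); apply: subset_leq_card; apply/subsetP => k.
rewrite !inE => /nonzeroRP nz; apply/negPn/negP => /Hx; exact: nz.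
Qed.

Definition coord_smooth d (Q : vec d -> R) (g : vec d -> vec d) (rp : R) : Prop :=
  forall (b b' : vec d) (i : 'I_d), (forall k, k != i -> b' k = b k) ->
    Q b' - Q b <= g b i * (b' i - b i) + rp / 2 * ((b' i - b i) * (b' i - b i)).

Lemma rsc_coord_smooth d (Q : vec d -> R) g rm rp :
  rsc Q g 1 rm rp -> coord_smooth Q g rp.
Proof.
move=> [_ [_ Hrsc]] b b' i Hoff.
have [Hsp Hdot Hnorm] := @single_coord_facts d (vsub b' b) i
  (fun k hk => ltac:(rewrite /vsub (Hoff k hk); ring)).
have [_ Hup] := Hrsc b b' Hsp.
by rewrite Hdot Hnorm /vsub in Hup; lra.
Qed.

Section Smooth.
Variables (d : nat) (Q : vec d -> R) (g : vec d -> vec d) (rp : R).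
Hypothesis Hsmooth : coord_smooth Q g rp.
Hypothesis Hrp : 0 < rp.

Definition coord_move (b : vec d) (i : 'I_d) (t : R) : vec d :=
  vadd b (vscale t (ej i)).

Lemma coord_move_supp (F : {set 'I_d}) b i t :
  supp b \subset F -> supp (coord_move b i t) \subset i |: F.
Proof.
move=> /subsetP Hb; apply/subsetP => k; rewrite inE => /nonzeroRP nz.
rewrite !inE; case: eqP => //= /eqP ki; apply: Hb; rewrite inE; apply/nonzeroRP.
by move: nz; rewrite /coord_move /vadd /vscale ej_diff // Rmult_0_r Rplus_0_r.
Qed.

Lemma coord_step_decrease b i :
  Q (coord_move b i (- g b i / rp)) <= Q b - g b i * g b i / (2 * rp).
Proof.
have := Hsmooth b (coord_move b i (- g b i / rp)) i.
rewrite /coord_move /vadd /vscale ej_same.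
move=> /(_ (fun k hk => ltac:(rewrite ej_diff //; ring))).
have -> : b i + - g b i / rp * 1 - b i = - g b i / rp by ring.
have : g b i * (- g b i / rp) + rp / 2 * (- g b i / rp * (- g b i / rp))
       = - (g b i * g b i) / (2 * rp) by field; lra.
lra.
Qed.

Lemma restricted_min_grad F b j :
  restricted_min Q F b -> j \in F -> g b j = 0.
Proof.
move=> [Hb Hmin] jF.
have HjF : j |: F = F by apply/setUidPr; rewrite sub1set.
have Hsupp := @coord_move_supp F b j (- g b j / rp) Hb.
rewrite HjF in Hsupp; have Hle := Hmin _ Hsupp.
have Hdec := coord_step_decrease b j.
have : g b j * g b j / (2 * rp) <= 0 by lra.
rewrite /Rdiv => Hneg.
have : g b j * g b j <= 0.
  by have := Rinv_0_lt_compat (2 * rp) ltac:(lra); nra.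
nra.
Qed.

(* A forward step of FoBa-gdt that was not stopped gains at least eps^2/(2 rp):
   the largest gradient coordinate off [F] is at least eps (the gradient
   vanishes on [F]), and coordinate descent along it stays in [i |: F]. *)
Lemma forward_gain eps F b i b' :
  restricted_min Q F b -> ~ (forall j, Rabs (g b j) < eps) -> i \notin F ->
  (forall j, j \notin F -> Rabs (g b j) <= Rabs (g b i)) ->
  restricted_min Q (i |: F) b' -> 0 < eps ->
  Q b - Q b' >= eps ^ 2 / (2 * rp).
Proof.
move=> Hm Hnostop iF Hmax [_ Hmin'] Heps.
have [j Hj] := not_all_ex_not _ _ Hnostop.
have jF : j \notin F.
  apply/negP => jF; apply: Hj.
  by rewrite (restricted_min_grad Hm jF) Rabs_R0.
have Hgi : eps <= Rabs (g b i) by have := Hmax _ jF; lra.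
have Hle := Hmin' _ (@coord_move_supp F b i (- g b i / rp) (proj1 Hm)).
have Hdec := coord_step_decrease b i.
have Habs : Rabs (g b i) * Rabs (g b i) = g b i * g b i.
  by rewrite -Rabs_mult Rabs_right //; nra.
have Hsq : eps ^ 2 <= g b i * g b i by rewrite -Habs; nra.
have : eps ^ 2 / (2 * rp) <= g b i * g b i / (2 * rp).
  by rewrite /Rdiv; apply: Rmult_le_compat_r => //; apply/Rlt_le/Rinv_0_lt_compat; lra.
lra.
Qed.

(* Removing coordinate [i] from a restricted minimizer over [F] with [i \in F]
   costs at most rp b_i^2 / 2, since the gradient vanishes there. *)
Lemma drop_cost F b i :
  restricted_min Q F b -> i \in F -> Qdrop Q b i - Q b <= rp / 2 * (b i * b i).
Proof.
move=> Hm iF.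
have := Hsmooth b (vsub b (vscale (b i) (ej i))) i.
rewrite /Qdrop /vsub /vscale ej_same (restricted_min_grad Hm iF).
move=> /(_ (fun k hk => ltac:(rewrite ej_diff //; ring))).
have -> : b i - b i * 1 - b i = - b i by ring.
nra.
Qed.

End Smooth.

Lemma restricted_min_empty d (Q : vec d -> R) : restricted_min Q set0 (@vzero d).
Proof.
split; first by apply/subsetP => k; rewrite inE /vzero => /nonzeroRP.
move=> b' Hb'; have -> : b' = @vzero d; last exact: Rle_refl.
apply: functional_extensionality => k; apply: notin_supp.
by apply/negP => /(subsetP Hb'); rewrite inE.
Qed.

Scheme fb_begin_mut := Induction for fb_begin Sort Prop
with fb_back_mut := Induction for fb_back Sort Prop.

Definition fb_invariant d (Q : vec d -> R) (rp eps : R) (s : state d) : Prop :=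
  restricted_min Q (stF s) (stB s) /\
  forall m, (1 <= m)%N -> (m <= #|stF s|)%N -> stDelta s m >= eps ^ 2 / (2 * rp).

(* Forward steps record a large delta (forward_gain) at the new top index;
   backward steps only shrink the support, so old deltas remain in range. *)
Lemma fb_begin_invariant d (Q : vec d -> R) g rp eps :
  coord_smooth Q g rp -> 0 < rp -> 0 < eps ->
  forall s, fb_begin Q g eps s -> fb_invariant Q rp eps s.
Proof.
move=> Hsm Hrp Heps s Hs.
apply: (@fb_begin_mut d Q g eps (fun s _ => fb_invariant Q rp eps s)
                               (fun s _ => fb_invariant Q rp eps s)) Hs => //.
- split; first exact: restricted_min_empty.
  by move=> m m1; rewrite cards0 leqn0 => /eqP m0; rewrite m0 in m1.
- move=> s0 i b' _ [Hm Hdelta] Hnostop iF Hmax Hm'; split=> //= m m1.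
  rewrite cardsU1 iF add1n leq_eqVlt ltnS /upd => /orP [/eqP ->|mle].
    by rewrite eqxx; exact (forward_gain Hsm Hrp Hm Hnostop iF Hmax Hm' Heps).
  by rewrite ltn_eqF ?ltnS //; apply: Hdelta.
- move=> s0 j b' _ [_ Hdelta] _ _ _ _ Hm'; split=> //= m m1 mle.
  by apply: Hdelta => //; apply: (leq_trans mle); apply/subset_leq_card/subD1set.
Qed.

Lemma fb_begin_backward_exit d (Q : vec d -> R) g eps s :
  fb_begin Q g eps s -> (1 <= #|stF s|)%N ->
  forall i, i \in stF s -> Qdrop Q (stB s) i - Q (stB s) >= stDelta s #|stF s| / 2.
Proof. by case=> [|s0 _ [e|h]] /=; [rewrite cards0 | rewrite e cards0 | ]. Qed.

Lemma fb_coord_mass d (Q : vec d -> R) g rp eps s i :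
  coord_smooth Q g rp -> 0 < rp -> 0 < eps ->
  fb_begin Q g eps s -> (1 <= #|stF s|)%N -> i \in stF s ->
  stDelta s #|stF s| / rp <= stB s i * stB s i.
Proof.
move=> Hsm Hrp Heps Hs Hk iF.
have [Hm _] := fb_begin_invariant Hsm Hrp Heps Hs.
have Hcost := drop_cost Hsm Hrp Hm iF.
have Hexit := fb_begin_backward_exit Hs Hk iF.
apply/(Rmult_le_reg_l rp) => //; rewrite /Rdiv -Rmult_assoc
  (Rmult_comm rp) Rmult_assoc Rinv_r ?Rmult_1_r; lra.
Qed.

Lemma sqnorm_off_supp d (F : {set 'I_d}) (b bbar : vec d) :
  sqnorm_on (F :\: supp bbar) b = sqnorm_on (F :\: supp bbar) (vsub b bbar).
Proof.
apply: eq_bigr => i; rewrite inE => /andP [ns _].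
by rewrite /vsub (@notin_supp _ bbar i ns) Rminus_0_r.
Qed.

Theorem mainTheorem12 (d : nat) (Q : vec d -> R) (gQ : vec d -> vec d)
  (rho_m1 rho_p1 eps : R)
  (Hconv : convex Q) (Hgrad : is_gradient Q gQ) (Hcont : continuous_vec gQ)
  (Hrsc : rsc Q gQ 1 rho_m1 rho_p1) (Heps : 0 < eps)
  (s : state d) (Hs : fb_begin Q gQ eps s) (Hk : (1 <= #|stF s|)%N)
  (bbar : vec d) :
  let k := #|stF s| in
  let A := stF s :\: supp bbar in
  sqnorm_on A (stB s) = sqnorm_on A (vsub (stB s) bbar) /\
  sqnorm_on A (vsub (stB s) bbar) >= stDelta s k / rho_p1 * INR #|A| /\
  stDelta s k / rho_p1 * INR #|A| >= eps ^ 2 / (2 * rho_p1 ^ 2) * INR #|A|.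
Proof.
move=> k A.
have Hrp : 0 < rho_p1 by case: Hrsc => _ [].
have Hsm := rsc_coord_smooth Hrsc.
have Hdelta : stDelta s k >= eps ^ 2 / (2 * rho_p1).
  by have [_ Hd] := fb_begin_invariant Hsm Hrp Heps Hs; apply: Hd.
have HA : 0 <= INR #|A| by apply: pos_INR.
split; first exact: sqnorm_off_supp.
split.
  rewrite -sqnorm_off_supp Rmult_comm; apply/Rle_ge/sum_ge_card => i.
  by rewrite inE => /andP [_ iF]; exact: fb_coord_mass Hsm Hrp Heps Hs Hk iF.
have -> : eps ^ 2 / (2 * rho_p1 ^ 2) = eps ^ 2 / (2 * rho_p1) / rho_p1
  by field; lra.
apply/Rle_ge/Rmult_le_compat_r => //; rewrite /Rdiv.
by apply: Rmult_le_compat_r; [apply/Rlt_le/Rinv_0_lt_compat | lra].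
Qed.
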